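(* Let $\hat\Omega$ be a compact set with connected interior containing $0$ and equal to the closure of its interior, $\mathcal{T}=\{\sigma_i\}_{i=1}^{m_{\mathcal{T}}}$ a triangulation of $\hat\Omega$, $f:\hat\Omega\to\mathbb{R}^n$, $G:\hat\Omega\to\mathbb{R}^{n\times m}$ continuous and $\mathcal{C}^2$ on each simplex, $\mathbb{I}_1\subseteq\mathbb{Z}_1^{m_{\mathcal{T}}}$ the index set defined in the context, and $\beta_i,\hat g_i,c_{i,j}$ as in the context. Let $\mathbf{y}=[\mathbf{W},\hat{\mathbf{L}},b_2,\hat u]$, with $\mathbf{W}=\{W_x\}_{x\in\mathbb{E}_{\mathcal{T}}}$ and $\hat{\mathbf{L}}=\{\hat l_i\}\subset\mathbb{R}^n$, be a feasible point of system (B): $\hat u>0$; $W_x>0$ for all $x\in\mathbb{E}_{\mathcal{T}}$; $|\nabla W_i|\le\hat l_i$ componentwise for all $i$; $f(x_{i,j})^\intercal\nabla W_i+(1_n^\intercal\hat l_i)(\beta_ic_{i,j}+\hat g_i\hat u)\le -b_2$ for all $i\in\mathbb{I}_1$, $j\in\mathbb{Z}_0^n$. Let $J$ be a cost function and consider minimizing $J(\mathbf{y}+\delta\mathbf{y})$ over $\delta\mathbf{y}=[\delta\mathbf{W},\delta\hat{\mathbf{L}},\delta b_2,\delta\hat u]$ subject to: $\hat u+\delta\hat u>0$; $W_x+\delta W_x>0$ for all $x\in\mathbb{E}_{\mathcal{T}}$; $|\nabla W_i+\delta\nabla W_i|\le\hat l_i+\delta\hat l_i$ componentwise for all $i$,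 with $\delta\nabla W_i=X_i^{-1}\delta\bar W_i$; and $Q_{i,j}\preceq0$ for all $i\in\mathbb{I}_1$, $j\in\mathbb{Z}_0^n$, where $$Q_{i,j}=\begin{bmatrix}\varphi_{i,j}+b_2+\delta b_2 & 1_n^\intercal\delta\hat l_i & \hat g_i\delta\hat u\\ 1_n^\intercal\delta\hat l_i & -2 & 0\\ \hat g_i\delta\hat u & 0 & -2\end{bmatrix},$$ $\varphi_{i,j}=f(x_{i,j})^\intercal(\nabla W_i+\delta\nabla W_i)+1_n^\intercal(\hat l_i+\delta\hat l_i)(\beta_ic_{i,j}+\hat g_i\hat u)+1_n^\intercal\hat l_i\,\hat g_i\,\delta\hat u$. Then for every feasible $\delta\mathbf{y}$ of this problem, $\mathbf{y}+\delta\mathbf{y}$ is a feasible point of (B); and if $\delta\mathbf{y}^\ast$ is an optimal solution, then $J(\mathbf{y}+\delta\mathbf{y}^\ast)\le J(\mathbf{y})$.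
   Context: A triangulation is a finite collection of $n$-simplexes $\sigma_i=\mathrm{co}(\{x_{i,j}\}_{j=0}^n)$ (affinely independent vertices) covering the set, pairwise meeting in common faces or not at all; $\mathbb{E}_{\mathcal{T}}$ is its vertex set; $x_{i,0}=0$ whenever $0\in\sigma_i$. A set $\mathcal{A}_1\subset\hat\Omega$ (compact, connected interior containing $0$, closure of its interior) whose boundary lies in the union of simplex boundaries is given, and $\mathbb{I}_1=\{i:\sigma_i\not\subseteq\mathcal{A}_1\}$. Constants: $\beta_i\ge\max_{p,q,r}\max_{\xi\in\sigma_i}|\partial^2 f^{(p)}/\partial x^{(q)}\partial x^{(r)}(\xi)|$; $\hat g_i=\max_{x\in\sigma_i}\|G(x)\|_\infty$ (induced $\infty$-norm); $c_{i,j}=\tfrac n2\|x_{i,j}-x_{i,0}\|_2(\max_{k\in\mathbb{Z}_1^n}\|x_{i,k}-x_{i,0}\|_2+\|x_{i,j}-x_{i,0}\|_2)$. $X_i$ has rows $(x_{i,j}-x_{i,0})^\intercal$; $\bar W_i$ (resp. $\delta\bar W_i$) has entries $W_{x_{i,j}}-W_{x_{i,0}}$ (resp. with $\delta W$); $\nabla W_i=X_i^{-1}\bar W_i$. $1_n$ is the all-ones vector, $|v|$ componentwise absolute value, $\preceq0$ negative semidefinite. *)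

From HB Require Import structures.
From mathcomp Require Import all_boot all_order all_algebra.
From mathcomp Require Import all_classical all_reals all_analysis.
Set Implicit Arguments. Unset Strict Implicit. Unset Printing Implicit Defensive.
Import Order.TTheory GRing.Theory Num.Theory.
Import numFieldNormedType.Exports.
Local Open Scope classical_set_scope.
Local Open Scope ring_scope.

Section Defs.
Variable R : realType.
Variable n : nat.
Notation pt := 'cV[R]_n.

Definition ebasis (q : 'I_n) : pt := delta_mx q 0.

Definition norm2 (v : pt) : R := Num.sqrt (\sum_(k < n) v k 0 ^+ 2).

Definition mx_inf_norm (m : nat) (A : 'M[R]_(n, m)) : R :=
  \big[Order.max/0]_(p < n) \sum_(q < m) `|A p q|.

Definition simplex (v : 'I_n.+1 -> pt) : set pt :=
  [set y | exists lam : 'I_n.+1 -> R, (forall j, 0 <= lam j) /\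
     \sum_(j < n.+1) lam j = 1 /\ y = \sum_(j < n.+1) lam j *: v j].

Definition subhull (v : 'I_n.+1 -> pt) (S : set pt) : set pt :=
  [set y | exists lam : 'I_n.+1 -> R, (forall j, 0 <= lam j) /\
     (forall j, ~ S (v j) -> lam j = 0) /\
     \sum_(j < n.+1) lam j = 1 /\ y = \sum_(j < n.+1) lam j *: v j].

Definition Xmat (v : 'I_n.+1 -> pt) : 'M[R]_n :=
  \matrix_(j < n, k < n) (v (lift ord0 j) - v ord0) k 0.

Definition vertset (v : 'I_n.+1 -> pt) : set pt := [set y | exists j, y = v j].

Definition triangulation (mT : nat) (x : 'I_mT -> 'I_n.+1 -> pt) (Om : set pt) :=
  [/\ (forall i, Xmat (x i) \in unitmx),               (* affinely independent *)
      \bigcup_(i in [set: 'I_mT]) simplex (x i) = Om,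
      (forall i k, i != k ->                             (* meet in common faces or not at all *)
         simplex (x i) `&` simplex (x k) = subhull (x i) (vertset (x k))) &
      (forall i, simplex (x i) 0 -> x i ord0 = 0)].

Definition admissible_domain (Om : set pt) :=
  [/\ compact Om, connected (interior Om), interior Om 0 & closure (interior Om) = Om].

Definition boundary (A : set pt) : set pt := closure A `\` interior A.

Definition C2_on (U : set pt) (g : pt -> R) :=
  [/\ forall x, U x -> forall r, derivable g x (ebasis r),
      forall x, U x -> forall q r, derivable ('D_(ebasis r) g) x (ebasis q),
      {within U, continuous g},
      forall r, {within U, continuous ('D_(ebasis r) g)} &
      forall q r, {within U, continuous ('D_(ebasis q) ('D_(ebasis r) g))}].

Definition vcomp (m : nat) (F : pt -> 'cV[R]_m) (p : 'I_m) : pt -> R := fun x => F x p 0.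
Definition mcomp (m : nat) (F : pt -> 'M[R]_(n, m)) (p : 'I_n) (q : 'I_m) : pt -> R :=
  fun x => F x p q.

Record dec (mT : nat) := Dec {
  dW : pt -> R;              (* W_x, relevant at the vertices *)
  dL : 'I_mT -> pt;
  db2 : R;
  du : R }.

Definition dec_add (mT : nat) (y d : dec mT) : dec mT :=
  Dec (fun x => dW y x + dW d x) (fun i => dL y i + dL d i) (db2 y + db2 d) (du y + du d).

Definition dec0 (mT : nat) : dec mT := Dec (fun _ => 0) (fun _ => 0) 0 0.

Definition Wbar (mT : nat) (x : 'I_mT -> 'I_n.+1 -> pt) (W : pt -> R) (i : 'I_mT) : pt :=
  \col_(j < n) (W (x i (lift ord0 j)) - W (x i ord0)).

Definition gradW (mT : nat) (x : 'I_mT -> 'I_n.+1 -> pt) (W : pt -> R) (i : 'I_mT) : pt :=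
  invmx (Xmat (x i)) *m Wbar x W i.

Definition dotv (a b : pt) : R := \sum_(k < n) a k 0 * b k 0.
Definition sum1 (a : pt) : R := \sum_(k < n) a k 0.

Definition cij (v : 'I_n.+1 -> pt) (j : 'I_n.+1) : R :=
  n%:R / 2 * norm2 (v j - v ord0) *
  (\big[Order.max/0]_(k < n) norm2 (v (lift ord0 k) - v ord0) + norm2 (v j - v ord0)).

Definition feasB (mT : nat) (x : 'I_mT -> 'I_n.+1 -> pt) (f : pt -> pt)
    (I1 : set 'I_mT) (beta ghat : 'I_mT -> R) (y : dec mT) :=
  [/\ 0 < du y,
      (forall i j, 0 < dW y (x i j)),
      (forall i k, `|gradW x (dW y) i k 0| <= dL y i k 0) &
      (forall i j, I1 i ->
         dotv (f (x i j)) (gradW x (dW y) i) +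
         sum1 (dL y i) * (beta i * cij (x i) j + ghat i * du y) <= - db2 y)].

Definition nsd (k : nat) (Q : 'M[R]_k) := forall v : 'cV[R]_k, (v^T *m Q *m v) 0 0 <= 0.

Definition Qmat (mT : nat) (x : 'I_mT -> 'I_n.+1 -> pt) (f : pt -> pt)
    (beta ghat : 'I_mT -> R) (y d : dec mT) (i : 'I_mT) (j : 'I_n.+1) : 'M[R]_3 :=
  let phi := dotv (f (x i j)) (gradW x (dW y) i + gradW x (dW d) i)
             + sum1 (dL y i + dL d i) * (beta i * cij (x i) j + ghat i * du y)
             + sum1 (dL y i) * ghat i * du d in
  let a := sum1 (dL d i) in
  let g := ghat i * du d in
  \matrix_(r < 3, s < 3)
    nth 0 (nth [::] [:: [:: phi + db2 y + db2 d; a; g];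
                        [:: a; -2; 0];
                        [:: g; 0; -2]] r) s.

Definition feasP (mT : nat) (x : 'I_mT -> 'I_n.+1 -> pt) (f : pt -> pt)
    (I1 : set 'I_mT) (beta ghat : 'I_mT -> R) (y d : dec mT) :=
  [/\ 0 < du y + du d,
      (forall i j, 0 < dW y (x i j) + dW d (x i j)),
      (forall i k, `|(gradW x (dW y) i + invmx (Xmat (x i)) *m Wbar x (dW d) i) k 0|
                   <= (dL y i + dL d i) k 0) &
      (forall i j, I1 i -> nsd (Qmat x f beta ghat y d i j))].

End Defs.
Arguments ebasis {R n}.

From HB Require Import structures.
From mathcomp Require Import all_boot all_order all_algebra.
From mathcomp Require Import all_classical all_reals all_analysis.
From mathcomp Require Import ring lra.
Set Implicit Arguments. Unset Strict Implicit. Unset Printing Implicit Defensive.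
Import Order.TTheory GRing.Theory Num.Theory.
Import numFieldNormedType.Exports.
Local Open Scope classical_set_scope.
Local Open Scope ring_scope.

(* By a Schur complement, Q_{i,j} <= 0 holds iff
   phi_{i,j} + b2 + db2 + ((1^T dl_i)^2 + (g_i du)^2) / 2 <= 0.
   The constraint of (B) at y + dy exceeds phi_{i,j} + b2 + db2 only by the
   cross term (1^T dl_i) (g_i du), which is at most that half sum of squares,
   so y + dy is feasible for (B).  Moreover dy = 0 is feasible, since then
   Q_{i,j} = diag(slack of (B) at y, -2, -2); an optimal dy* therefore does
   at least as well as J(y). *)

Section LinearAlgebra.
Variable R : realType.

Definition arrow_mx (p a g : R) : 'M[R]_3 :=
  \matrix_(r < 3, s < 3)
    nth 0 (nth [::] [:: [:: p; a; g]; [:: a; -2; 0]; [:: g; 0; -2]] r) s.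

Lemma nsd_arrow_mxP (p a g : R) :
  nsd (arrow_mx p a g) <-> p + (a ^+ 2 + g ^+ 2) / 2 <= 0.
Proof.
have quad (v : 'cV[R]_3) : (v^T *m arrow_mx p a g *m v) 0 0 =
    let: (v0, v1, v2) := (v ord0 0, v (lift ord0 ord0) 0,
                          v (lift ord0 (lift ord0 ord0)) 0) in
    p * v0 ^+ 2 + 2 * a * v0 * v1 + 2 * g * v0 * v2 - 2 * v1 ^+ 2 - 2 * v2 ^+ 2.
  rewrite !mxE !big_ord_recl big_ord0 !mxE !big_ord_recl !big_ord0 !mxE /=.
  by rewrite /bump /=; ring.
split.
- pose v : 'cV[R]_3 := \col_(k < 3) nth 0 [:: 1; a / 2; g / 2] k.
  move=> /(_ v); rewrite quad !mxE /=.
  suff -> : p * 1 ^+ 2 + 2 * a * 1 * (a / 2) + 2 * g * 1 * (g / 2)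
            - 2 * (a / 2) ^+ 2 - 2 * (g / 2) ^+ 2 = p + (a ^+ 2 + g ^+ 2) / 2 by [].
  by field.
- move=> hp v; rewrite quad.
  set v0 := v ord0 0; set v1 := v _ 0; set v2 := v _ 0.
  have -> : p * v0 ^+ 2 + 2 * a * v0 * v1 + 2 * g * v0 * v2
            - 2 * v1 ^+ 2 - 2 * v2 ^+ 2
          = (p + (a ^+ 2 + g ^+ 2) / 2) * v0 ^+ 2
            - 2 * (v1 - a * v0 / 2) ^+ 2 - 2 * (v2 - g * v0 / 2) ^+ 2.
    by field.
  have := mulr_le0_ge0 hp (sqr_ge0 v0).
  have := sqr_ge0 (v1 - a * v0 / 2); have := sqr_ge0 (v2 - g * v0 / 2); lra.
Qed.

Variable n : nat.

Lemma sum1D (u v : 'cV[R]_n) : sum1 (u + v) = sum1 u + sum1 v.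
Proof. by rewrite /sum1 -big_split; apply: eq_bigr => k _; rewrite mxE. Qed.

Lemma sum10 : sum1 (0 : 'cV[R]_n) = 0.
Proof. by rewrite /sum1 big1 // => k _; rewrite mxE. Qed.

Variable mT : nat.
Implicit Types (x : 'I_mT -> 'I_n.+1 -> 'cV[R]_n) (W V : 'cV[R]_n -> R).

Lemma WbarD x W V i :
  Wbar x (fun z => W z + V z) i = Wbar x W i + Wbar x V i.
Proof. by apply/matrixP => a b; rewrite !mxE; ring. Qed.

Lemma Wbar0 x i : Wbar x (fun _ => 0) i = 0.
Proof. by apply/matrixP => a b; rewrite !mxE subrr. Qed.

Lemma gradWD x W V i :
  gradW x (fun z => W z + V z) i = gradW x W i + gradW x V i.
Proof. by rewrite /gradW WbarD mulmxDr. Qed.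

Lemma gradW0 x i : gradW x (fun _ => 0) i = 0.
Proof. by rewrite /gradW Wbar0 mulmx0. Qed.

End LinearAlgebra.

Section Feasibility.
Variables (R : realType) (n mT : nat).
Variables (x : 'I_mT -> 'I_n.+1 -> 'cV[R]_n) (f : 'cV[R]_n -> 'cV[R]_n).
Variables (I1 : set 'I_mT) (beta ghat : 'I_mT -> R) (y : dec R n mT).

Lemma dec_addr0 : dec_add y (dec0 R n mT) = y.
Proof.
by case: y => W L b u; congr Dec; rewrite ?addr0 //; apply: funext => z;
  rewrite /= addr0.
Qed.

Lemma Qmat_arrow_mx d i j :
  Qmat x f beta ghat y d i j =
  arrow_mx (dotv (f (x i j)) (gradW x (dW y) i + gradW x (dW d) i)
            + sum1 (dL y i + dL d i) * (beta i * cij (x i) j + ghat i * du y)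
            + sum1 (dL y i) * ghat i * du d + db2 y + db2 d)
           (sum1 (dL d i)) (ghat i * du d).
Proof. by []. Qed.

Lemma feasP_feasB_add d :
  feasP x f I1 beta ghat y d -> feasB x f I1 beta ghat (dec_add y d).
Proof.
case=> hu hW hL hQ; split=> //= [i k|i j /(hQ i j)]; rewrite gradWD; first exact: hL.
rewrite Qmat_arrow_mx => /nsd_arrow_mxP.
set a := sum1 (dL d i); set g := ghat i * du d.
have -> : sum1 (dL y i + dL d i) * (beta i * cij (x i) j + ghat i * (du y + du d))
    = sum1 (dL y i + dL d i) * (beta i * cij (x i) j + ghat i * du y)
      + sum1 (dL y i) * ghat i * du d + a * g.
  by rewrite /a /g sum1D; ring.
have := sqr_ge0 (a - g); rewrite sqrrB; lra.
Qed.

Lemma feasB_feasP0 :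
  feasB x f I1 beta ghat y -> feasP x f I1 beta ghat y (dec0 R n mT).
Proof.
case=> hu hW hL hB; split=> /= [|i j|i k|i j /(hB i j) hBij]; rewrite ?addr0 //.
  by rewrite Wbar0 mulmx0 addr0.
apply/nsd_arrow_mxP; rewrite gradW0 sum10 !addr0 !mulr0 !addr0.
by rewrite expr0n /= addr0 mul0r addr0 -lerBrDr sub0r.
Qed.

End Feasibility.

Theorem theorem5 (R : realType) (n m mT : nat)
  (Om : set 'cV[R]_n) (x : 'I_mT -> 'I_n.+1 -> 'cV[R]_n)
  (f : 'cV[R]_n -> 'cV[R]_n) (G : 'cV[R]_n -> 'M[R]_(n, m))
  (A1 : set 'cV[R]_n) (beta ghat : 'I_mT -> R) (y : dec R n mT) (J : dec R n mT -> R) :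
  admissible_domain Om ->
  triangulation x Om ->
  {within Om, continuous f} ->
  {within Om, continuous G} ->
  (* f is C^2 on each simplex, and beta_i bounds its second partials there *)
  (forall i : 'I_mT, exists (U : set 'cV[R]_n) (fi : 'cV[R]_n -> 'cV[R]_n),
     [/\ open U, simplex (x i) `<=` U,
         (forall xi, simplex (x i) xi -> fi xi = f xi),
         (forall p : 'I_n, C2_on U (vcomp fi p)) &
         (forall xi, simplex (x i) xi -> forall p q r : 'I_n,
            `|'D_(ebasis q) ('D_(ebasis r) (vcomp fi p)) xi| <= beta i)]) ->
  (* G is C^2 on each simplex *)
  (forall i : 'I_mT, exists (U : set 'cV[R]_n) (Gi : 'cV[R]_n -> 'M[R]_(n, m)),
     [/\ open U, simplex (x i) `<=` U,
         (forall xi, simplex (x i) xi -> Gi xi = G xi) &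
         (forall (p : 'I_n) (q : 'I_m), C2_on U (mcomp Gi p q))]) ->
  (* ghat_i = max_{x in sigma_i} ||G(x)||_inf *)
  (forall i : 'I_mT,
     (forall xi, simplex (x i) xi -> mx_inf_norm (G xi) <= ghat i) /\
     (exists2 xi, simplex (x i) xi & mx_inf_norm (G xi) = ghat i)) ->
  (* the set A_1 *)
  A1 `<=` Om -> admissible_domain A1 ->
  boundary A1 `<=` \bigcup_(i in [set: 'I_mT]) boundary (simplex (x i)) ->
  (* y is feasible for (B), with I_1 = {i | sigma_i not included in A_1} *)
  feasB x f [set i | ~ (simplex (x i) `<=` A1)] beta ghat y ->
  (forall d : dec R n mT,
     feasP x f [set i | ~ (simplex (x i) `<=` A1)] beta ghat y d ->
     feasB x f [set i | ~ (simplex (x i) `<=` A1)] beta ghat (dec_add y d)) /\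
  (forall dstar : dec R n mT,
     feasP x f [set i | ~ (simplex (x i) `<=` A1)] beta ghat y dstar ->
     (forall d : dec R n mT,
        feasP x f [set i | ~ (simplex (x i) `<=` A1)] beta ghat y d ->
        J (dec_add y dstar) <= J (dec_add y d)) ->
     J (dec_add y dstar) <= J y).
Proof.
move=> _ _ _ _ _ _ _ _ _ _ feasy; split=> [d|dstar _ opt]; first exact: feasP_feasB_add.
by rewrite -{2}(dec_addr0 y); apply/opt/feasB_feasP0.
Qed.
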